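(* Let $(F_n)$ be the Fibonacci numbers ($F_0=0$, $F_1=1$, $F_{n+2}=F_{n+1}+F_n$), $(E_n)$ the sequence with $E_0=0$, $E_1=E_2=1$, $E_{n+3}=E_n+E_{n+2}$, and $(D_n)$ the sequence with $D_0=1$, $D_1=D_2=0$, $D_{n+3}=D_n+D_{n+1}$ (all indexed by $\mathbb Z$). Then for every fixed integer $k\ge 0$, $$\lim_{n\to+\infty}(E_{n-k}-D_n)=\lim_{n\to+\infty}(F_{n-k}-E_n)=+\infty.$$ *)

From Stdlib Require Import ZArith Reals.
From Coquelicot Require Import Coquelicot.
Open Scope Z_scope.

Fixpoint Fib (n : nat) : Z :=
  match n with
  | O => 0
  | S O => 1
  | S ((S m) as p) => Fib p + Fib m
  end.

Fixpoint Eseq (n : nat) : Z :=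
  match n with
  | O => 0
  | S O => 1
  | S (S O) => 1
  | S ((S (S m)) as q) => Eseq m + Eseq q
  end.

Fixpoint Dseq (n : nat) : Z :=
  match n with
  | O => 1
  | S O => 0
  | S (S O) => 0
  | S (S ((S m) as p)) => Dseq m + Dseq p
  end.

(** The three sequences grow geometrically at different rates: [F] like the
    golden ratio (about 1.618), [E] like the real root of [x^3 = x^2 + 1]
    (about 1.466), and [D] like the plastic number, the real root of
    [x^3 = x + 1] (about 1.325).  Rational ratios separating these rates,
    [4/3 < 7/5] and [3/2 < 8/5], give explicit geometric bounds by a
    three-step induction; the shift by [k] only changes a constant factor,
    which cannot compensate for the gap between the two rates. *)

From Stdlib Require Import ZArith Reals Lra Lia.
From Coquelicot Require Import Coquelicot.

Open Scope R_scope.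

Lemma nat_ind3 (P : nat -> Prop) :
  P 0%nat -> P 1%nat -> P 2%nat ->
  (forall n, P n -> P (S n) -> P (S (S n)) -> P (S (S (S n)))) ->
  forall n, P n.
Proof.
  intros P0 P1 P2 PS n.
  enough (P n /\ P (S n) /\ P (S (S n))) by tauto.
  induction n as [|n IH]; intuition.
Qed.

Lemma Fib_ge_pow n : (8/5)^n <= 2 * IZR (Fib (S n)).
Proof.
  induction n using nat_ind3; try (simpl; lra).
  change (Fib (S (S (S (S n))))) with (Fib (S (S (S n))) + Fib (S (S n)))%Z.
  rewrite plus_IZR.
  assert (0 <= (8/5)^n) by (apply pow_le; lra).
  cbn [pow] in *; lra.
Qed.

Lemma Eseq_ge_pow n : (7/5)^n <= 2 * IZR (Eseq (S n)).
Proof.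
  induction n using nat_ind3; try (simpl; lra).
  change (Eseq (S (S (S (S n))))) with (Eseq (S n) + Eseq (S (S (S n))))%Z.
  rewrite plus_IZR.
  assert (0 <= (7/5)^n) by (apply pow_le; lra).
  cbn [pow] in *; lra.
Qed.

Lemma Eseq_le_pow n : IZR (Eseq n) <= (3/2)^n.
Proof.
  induction n using nat_ind3; try (simpl; lra).
  change (Eseq (S (S (S n)))) with (Eseq n + Eseq (S (S n)))%Z.
  rewrite plus_IZR.
  assert (0 <= (3/2)^n) by (apply pow_le; lra).
  cbn [pow] in *; lra.
Qed.

Lemma Dseq_le_pow n : IZR (Dseq n) <= (4/3)^n.
Proof.
  induction n using nat_ind3; try (simpl; lra).
  change (Dseq (S (S (S n)))) with (Dseq n + Dseq (S n))%Z.
  rewrite plus_IZR.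
  assert (0 <= (4/3)^n) by (apply pow_le; lra).
  cbn [pow] in *; lra.
Qed.

Lemma is_lim_seq_pow_sub_pow (A B p q : R) :
  0 < A -> 1 < p -> 0 <= q < p ->
  is_lim_seq (fun m => A * p^m - B * q^m) p_infty.
Proof.
  intros HA Hp Hq.
  apply is_lim_seq_ext with (fun m => p^m * (A - B * (q/p)^m)).
  { intros m. unfold Rdiv. rewrite Rpow_mult_distr, pow_inv.
    field. apply pow_nonzero; lra. }
  assert (Hratio : is_lim_seq (fun m => (q/p)^m) 0).
  { apply is_lim_seq_geom. rewrite Rabs_pos_eq.
    - apply Rmult_lt_reg_r with p; [lra|]. field_simplify; lra.
    - apply Rdiv_le_0_compat; lra. }
  eapply is_lim_seq_mult.
  - apply is_lim_seq_geom_p; exact Hp.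
  - eapply is_lim_seq_minus.
    + apply is_lim_seq_const.
    + apply (is_lim_seq_scal_l _ B _ Hratio).
    + reflexivity.
  - apply is_Rbar_mult_p_infty_pos. cbn. lra.
Qed.

Lemma is_lim_seq_sub_of_pow_bounds (u v : nat -> Z) (p q : R) (k : nat) :
  1 < p -> 0 <= q < p ->
  (forall n, p^n <= 2 * IZR (u (S n))) ->
  (forall n, IZR (v n) <= q^n) ->
  is_lim_seq (fun n => IZR (u (n - k)%nat - v n)) p_infty.
Proof.
  intros Hp Hq Hu Hv.
  apply (is_lim_seq_incr_n _ (S k)).
  eapply is_lim_seq_le_p_loc.
  2: apply (is_lim_seq_pow_sub_pow (1/2) (q^(S k)) p q); lra.
  exists 0%nat; intros n _.
  replace (n + S k - k)%nat with (S n) by lia.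
  rewrite minus_IZR.
  specialize (Hu n). specialize (Hv (n + S k)%nat). rewrite pow_add in Hv.
  lra.
Qed.

Theorem theorem13 (k : nat) :
  is_lim_seq (fun n : nat => IZR (Eseq (n - k) - Dseq n)) p_infty /\
  is_lim_seq (fun n : nat => IZR (Fib (n - k) - Eseq n)) p_infty.
Proof.
  split.
  - apply (is_lim_seq_sub_of_pow_bounds Eseq Dseq (7/5) (4/3)); try lra.
    + exact Eseq_ge_pow.
    + exact Dseq_le_pow.
  - apply (is_lim_seq_sub_of_pow_bounds Fib Eseq (8/5) (3/2)); try lra.
    + exact Fib_ge_pow.
    + exact Eseq_le_pow.
Qed.
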